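(* Let $k\ge 2$, $D=\{0,1,\dots,k\}$, let $f:D^n\to\mathbb{R}$ be a $k$-submodular function, let $P\subseteq D^n$ be the set of points minimising $f$, and let $P_{\mathrm{int}}=P\cap\{1,\dots,k\}^n$. Then $P_{\mathrm{int}}$ can be described as the set of solutions in $\{1,\dots,k\}^n$ of a conjunction of arbitrary unary constraints and constraints of the forms $(x=a\lor y=b)$ with $a,b\in\{1,\dots,k\}$ and $(x=\pi(y))$ with $\pi$ a permutation of $\{1,\dots,k\}$.
   Context: With $\sqcap,\sqcup$ on $\{0,\dots,k\}$ given by $0\sqcap x=0$, $0\sqcup x=x$, $x\sqcap x=x\sqcup x=x$ and $x\sqcap y=x\sqcup y=0$ for distinct nonzero $x,y$, a function $f$ on $D^n$ is $k$-submodular if $f(X)+f(Y)\ge f(X\sqcap Y)+f(X\sqcup Y)$ for all $X,Y\in D^n$, with operations applied coordinatewise. *)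

From HB Require Import structures.
From mathcomp Require Import all_boot all_order all_fingroup all_algebra.
Set Implicit Arguments. Unset Strict Implicit. Unset Printing Implicit Defensive.
Import Order.TTheory GRing.Theory Num.Theory.

(* The domain D = {0,1,...,k} is 'I_k.+1; points of D^n are {ffun 'I_n -> 'I_k.+1}. *)

Definition kmeet (k : nat) (x y : 'I_k.+1) : 'I_k.+1 :=
  if x == y then x else ord0.

Definition kjoin (k : nat) (x y : 'I_k.+1) : 'I_k.+1 :=
  if x == ord0 then y else if y == ord0 then x else if x == y then x else ord0.

Definition vmeet (n k : nat) (X Y : {ffun 'I_n -> 'I_k.+1}) : {ffun 'I_n -> 'I_k.+1} :=
  [ffun i => kmeet (X i) (Y i)].

Definition vjoin (n k : nat) (X Y : {ffun 'I_n -> 'I_k.+1}) : {ffun 'I_n -> 'I_k.+1} :=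
  [ffun i => kjoin (X i) (Y i)].

Local Open Scope ring_scope.

Definition k_submodular (R : realFieldType) (n k : nat)
  (f : {ffun 'I_n -> 'I_k.+1} -> R) : Prop :=
  forall X Y, f (vmeet X Y) + f (vjoin X Y) <= f X + f Y.

Definition is_minimiser (R : realFieldType) (n k : nat)
  (f : {ffun 'I_n -> 'I_k.+1} -> R) (X : {ffun 'I_n -> 'I_k.+1}) : Prop :=
  forall Y, f X <= f Y.

Local Close Scope ring_scope.

Definition is_int (n k : nat) (X : {ffun 'I_n -> 'I_k.+1}) : bool :=
  [forall i, X i != ord0].

Inductive kconstr (n k : nat) : Type :=
| CUnary of 'I_n & {set 'I_k.+1}                  (* x_i \in S *)
| CDisj  of 'I_n & 'I_n & 'I_k.+1 & 'I_k.+1       (* x_i = a \/ x_j = b *)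
| CPerm  of 'I_n & 'I_n & {perm 'I_k.+1}.         (* x_i = pi (x_j) *)

(* well-formedness: a, b in {1..k}; pi fixes 0, so it restricts to a
   permutation of {1..k} (and every permutation of {1..k} arises this way) *)
Definition kconstr_wf (n k : nat) (c : kconstr n k) : bool :=
  match c with
  | CUnary _ _ => true
  | CDisj _ _ a b => (a != ord0) && (b != ord0)
  | CPerm _ _ pi => pi ord0 == ord0
  end.

Definition kconstr_sat (n k : nat) (c : kconstr n k) (X : {ffun 'I_n -> 'I_k.+1}) : bool :=
  match c with
  | CUnary i A => X i \in A
  | CDisj i j a b => (X i == a) || (X j == b)
  | CPerm i j pi => X i == pi (X j)
  end.

From HB Require Import structures.
From mathcomp Require Import all_boot all_order all_fingroup all_algebra.
From mathcomp Require Import lra.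
Set Implicit Arguments. Unset Strict Implicit. Unset Printing Implicit Defensive.
Import Order.TTheory GRing.Theory Num.Theory.

(* The minimisers of f lying in {1,...,k}^n are closed under the dual
   discriminator d(x,y,z) = (if x = y then x else z): on nonzero entries
   d(x,y,z) = ((x ⊓ y) ⊔ z) ⊔ (x ⊓ y), and the minimisers of a k-submodular
   function are closed under ⊓ and ⊔.  Since d is a majority operation, a
   relation closed under d contains every tuple all of whose binary projections
   it contains (Baker-Pixley).  A binary relation closed under d whose
   projections contain a and b but which misses (a, b) is either contained in
   some relation (x = a' \/ y = b') excluding (a, b), or is the graph of a
   partial bijection, which extends to a permutation.  Hence the constraints of
   the three allowed forms that hold on all integral minimisers describe them. *)

Definition dual_discr (T : eqType) (x y z : T) := if x == y then x else z.

Lemma dual_discr_maj (T : eqType) (x y z w : T) :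
  [|| (x == w) && (y == w), (x == w) && (z == w) | (y == w) && (z == w)] ->
  dual_discr x y z = w.
Proof.
rewrite /dual_discr; have [<- | nxy] := eqVneq x y.
  by case/or3P => /andP[/eqP].
by case/or3P => /andP[/eqP ex /eqP ey] //; rewrite ex ey eqxx in nxy.
Qed.

Definition dual_discr_closed (T : eqType) (B : rel T) :=
  forall p1 q1 r1 p2 q2 r2, B p1 p2 -> B q1 q2 -> B r1 r2 ->
    B (dual_discr p1 q1 r1) (dual_discr p2 q2 r2).

Lemma dual_discr_closedT (T : eqType) (B : rel T) :
  dual_discr_closed B -> dual_discr_closed (fun u v => B v u).
Proof. by move=> hB p1 q1 r1 p2 q2 r2 h1 h2 h3; apply: hB. Qed.

Lemma dual_discr_closed_branch (T : eqType) (B : rel T) c d d' x y :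
  dual_discr_closed B -> B c d -> B c d' -> d != d' -> B x y -> B c y.
Proof.
move=> hB Bcd Bcd' ndd' Bxy; have := hB _ _ _ _ _ _ Bcd Bcd' Bxy.
by rewrite /dual_discr eqxx (negbTE ndd').
Qed.

Section ExcludedPair.

Variables (T : eqType) (B : rel T).
Hypothesis hB : dual_discr_closed B.
Variables a b a' b' : T.
Hypotheses (Bab' : B a b') (Ba'b : B a' b) (nBab : ~~ B a b).

Lemma rel_excluded_snd u : B u b -> u = a'.
Proof.
move=> Bub; apply/eqP/negPn/negP => nua'.
have hBT := dual_discr_closedT hB.
by move: nBab; rewrite (dual_discr_closed_branch hBT Bub Ba'b nua' Bab').
Qed.

Lemma rel_functional_of_escape u0 v0 : B u0 v0 -> u0 != a' -> v0 != b' ->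
  forall c d d', B c d -> B c d' -> d = d'.
Proof.
move=> Bu0v0 nu0 nv0 c d d' Bcd Bcd'; apply/eqP/negPn/negP => ndd'.
have na : a' != a by apply: contraNneq nBab => <-.
have ec := rel_excluded_snd (dual_discr_closed_branch hB Bcd Bcd' ndd' Ba'b).
subst c.
have Ba'b' := dual_discr_closed_branch hB Bcd Bcd' ndd' Bab'.
have Bu0b' : B u0 b'.
  by have := hB Ba'b' Bab' Bu0v0; rewrite /dual_discr (negbTE na) eqxx.
have nv0' : b' != v0 by rewrite eq_sym.
have := rel_excluded_snd (dual_discr_closed_branch hB Bu0b' Bu0v0 nv0' Ba'b).
by move/eqP; rewrite (negbTE nu0).
Qed.

End ExcludedPair.

Lemma dual_discr_closed_rel_cases (T : finType) (B : rel T) a b a' b' :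
  dual_discr_closed B -> B a b' -> B a' b -> ~~ B a b ->
  (forall u v, B u v -> (u == a') || (v == b')) \/
  (forall u v v', B u v -> B u v' -> v = v') /\
  (forall u u' v, B u v -> B u' v -> u = u').
Proof.
move=> hB Bab' Ba'b nBab.
case: (pickP (fun p : T * T => B p.1 p.2 && ~~ ((p.1 == a') || (p.2 == b')))).
  move=> [u0 v0] /andP[/= Bu0v0 /norP[nu0 nv0]]; right; split.
    exact: (rel_functional_of_escape hB Bab' Ba'b nBab Bu0v0).
  move=> u u' v Buv Bu'v.
  exact: (@rel_functional_of_escape T (fun u v => B v u) (dual_discr_closedT hB)
    b a b' a' Ba'b Bab' nBab v0 u0 Bu0v0 nv0 nu0 v u u' Buv Bu'v).
move=> none; left=> u v Buv.
by have := none (u, v); rewrite /= Buv => /negbFE.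
Qed.

Lemma perm_extend_pairs (T : finType) (z : T) (s : seq (T * T)) :
  uniq s -> {in s &, forall p q, (p.1 == q.1) = (p.2 == q.2)} ->
  {in s, forall p, (p.1 != z) && (p.2 != z)} ->
  exists2 pi : {perm T}, pi z = z & {in s, forall p, pi p.1 = p.2}.
Proof.
elim: s => [|[v u] s IH] /=; first by exists 1%g; rewrite ?perm1.
move=> /andP[ns us] eq12 nz.
have [pi pz hpi] : exists2 pi : {perm T}, pi z = z & {in s, forall p, pi p.1 = p.2}.
  apply: IH => // [p q sp sq|p sp]; first by apply: eq12; rewrite inE ?sp ?sq orbT.
  by apply: nz; rewrite inE sp orbT.
have /andP[vz uz] := nz (v, u) (mem_head _ _).
have pvz : pi v != z by rewrite -pz (inj_eq perm_inj).
exists (pi * tperm (pi v) u)%g; first by rewrite permM pz tpermD // eq_sym.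
move=> p; rewrite inE => /orP[/eqP -> | sp]; first by rewrite permM /= tpermL.
rewrite permM hpi //.
have e := eq12 (v, u) p (mem_head _ _) (@mem_behead _ ((v, u) :: s) p sp).
have nv : v != p.1.
  apply/negP => /eqP ev; move: (e); rewrite /= ev eqxx => /esym/eqP eu.
  by move: ns; rewrite ev eu -surjective_pairing sp.
have nu : u != p.2 by move: e; rewrite /= (negbTE nv) => <-.
by rewrite tpermD // -(hpi p sp) (inj_eq perm_inj).
Qed.

Lemma perm_extend_rel (T : finType) (z : T) (r : rel T) :
  (forall u v v', r u v -> r u v' -> v = v') ->
  (forall u u' v, r u v -> r u' v -> u = u') ->
  (forall u v, r u v -> (u != z) && (v != z)) ->
  exists2 pi : {perm T}, pi z = z & forall u v, r u v -> pi u = v.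
Proof.
move=> r_fun r_inj r_nz.
have [|[u v] [u' v']|[u v]|pi pz hpi] :=
  @perm_extend_pairs T z [seq p <- enum {: T * T} | r p.1 p.2].
- by rewrite filter_uniq // enum_uniq.
- rewrite !mem_filter /= => /andP[ruv _] /andP[ru'v' _].
  by apply/eqP/eqP => [e|e]; [apply: r_fun ruv _; rewrite e | apply: r_inj ruv _; rewrite e].
- by rewrite mem_filter => /andP[/r_nz].
by exists pi => // u v ruv; apply: (hpi (u, v)); rewrite mem_filter mem_enum ruv.
Qed.

Lemma dual_discr_closed_rel_separated (T : finType) (z : T) (B : rel T) a b a' b' :
  dual_discr_closed B -> (forall u v, B u v -> (u != z) && (v != z)) ->
  B a b' -> B a' b -> ~~ B a b ->
  (forall u v, B u v -> (u == a') || (v == b')) /\ ~~ ((a == a') || (b == b')) \/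
  exists2 pi : {perm T}, pi z = z & (forall u v, B u v -> u = pi v) /\ a != pi b.
Proof.
move=> hB B_nz Bab' Ba'b nBab.
have na : a != a' by apply: contraNneq nBab => ->.
have nb : b != b' by apply: contraNneq nBab => ->.
case: (dual_discr_closed_rel_cases hB Bab' Ba'b nBab) => [B_disj | [B_fun B_inj]].
  by left; rewrite (negbTE na) (negbTE nb).
right; have [|||pi pz hpi] := @perm_extend_rel T z (fun v u => B u v).
- by move=> v u u' Buv Bu'v; apply: B_inj Buv Bu'v.
- by move=> v v' u Buv Buv'; apply: B_fun Buv Buv'.
- by move=> v u /B_nz /andP[-> ->].
by exists pi => //; split=> [u v /hpi <- //|]; rewrite (hpi _ _ Ba'b).
Qed.

Definition ddv (I : finType) (T : eqType) (X Y Z : {ffun I -> T}) : {ffun I -> T} :=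
  [ffun i => dual_discr (X i) (Y i) (Z i)].

Definition ddv_closed (I : finType) (T : eqType) (S : pred {ffun I -> T}) :=
  forall X Y Z, S X -> S Y -> S Z -> S (ddv X Y Z).

Section PairwiseDetermined.

Variables (I : finType) (T : eqType) (S : pred {ffun I -> T}).
Hypothesis S_ddv : ddv_closed S.
Variable X : {ffun I -> T}.
Hypotheses (S0 : exists Y, S Y)
  (S_pair : forall i j, exists2 Y, S Y & (Y i == X i) && (Y j == X j)).

Lemma ddv_closed_agree (s : seq I) : exists2 Y, S Y & all (fun i => Y i == X i) s.
Proof.
elim: {s}(size s).+1 {-2}s (ltnSn (size s)) => // m IH.
case=> [|i1 [|i2 [|i3 r]]] lt_m.
- by case: S0 => Y SY; exists Y.
- by have [Y SY /andP[e _]] := S_pair i1 i1; exists Y; rewrite //= e.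
- by have [Y SY /andP[e1 e2]] := S_pair i1 i2; exists Y; rewrite //= e1 e2.
have [Y1 S1 /allP eq1] := IH (i2 :: i3 :: r) lt_m.
have [Y2 S2 /allP eq2] := IH (i1 :: i3 :: r) lt_m.
have [Y3 S3 /allP eq3] := IH (i1 :: i2 :: r) lt_m.
(* Each coordinate of s is missed by at most one of Y1, Y2, Y3. *)
exists (ddv Y1 Y2 Y3); first exact: S_ddv.
apply/allP => j; rewrite ffunE inE => j_s; apply/eqP/dual_discr_maj.
have [-> | n1] := eqVneq j i1.
  by rewrite eq2 ?eq3 ?orbT // !inE eqxx.
move: j_s; rewrite (negbTE n1) /= inE; have [-> _ | n2 /= j_s] := eqVneq j i2.
  by rewrite eq1 ?eq3 ?orbT // !inE eqxx ?orbT.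
by rewrite eq1 ?eq2 // inE ?j_s ?orbT.
Qed.

Lemma ddv_closed_pairwise_mem : S X.
Proof.
have [Y SY /allP eqY] := ddv_closed_agree (enum I).
suff -> : X = Y by [].
by apply/ffunP => i; apply/esym/eqP/eqY; rewrite mem_enum.
Qed.

End PairwiseDetermined.

Definition coord_rel (I T : finType) (S : pred {ffun I -> T}) (i j : I) : rel T :=
  fun u v => [exists Y, S Y && (Y i == u) && (Y j == v)].

Lemma coord_rel_dual_discr_closed (I T : finType) (S : pred {ffun I -> T}) :
  ddv_closed S -> forall i j, dual_discr_closed (coord_rel S i j).
Proof.
move=> S_ddv i j p1 q1 r1 p2 q2 r2.
move=> /existsP[Y1 /andP[/andP[S1 /eqP e1] /eqP e1']].
move=> /existsP[Y2 /andP[/andP[S2 /eqP e2] /eqP e2']].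
move=> /existsP[Y3 /andP[/andP[S3 /eqP e3] /eqP e3']].
apply/existsP; exists (ddv Y1 Y2 Y3).
by rewrite S_ddv //= !ffunE e1 e2 e3 e1' e2' e3' !eqxx.
Qed.

Lemma dual_discr_kjoin_kmeet k (x y z : 'I_k.+1) :
  x != ord0 -> z != ord0 ->
  dual_discr x y z = kjoin (kjoin (kmeet x y) z) (kmeet x y).
Proof.
move=> nx nz; rewrite /dual_discr /kjoin /kmeet.
have [_ | nxy] := eqVneq x y; last by rewrite eqxx (negbTE nz).
rewrite (negbTE nx) (negbTE nz).
by have [_ | _] := eqVneq x z; rewrite ?eqxx // (negbTE nx).
Qed.

Definition is_minimiserb (R : realFieldType) n k (f : {ffun 'I_n -> 'I_k.+1} -> R) X :=
  [forall Y, (f X <= f Y)%R].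

Lemma is_minimiserP (R : realFieldType) n k (f : {ffun 'I_n -> 'I_k.+1} -> R) X :
  reflect (is_minimiser f X) (is_minimiserb f X).
Proof. exact: (iffP forallP). Qed.

Lemma minimiser_vmeet_vjoin (R : realFieldType) n k (f : {ffun 'I_n -> 'I_k.+1} -> R) X Y :
  k_submodular f -> is_minimiser f X -> is_minimiser f Y ->
  is_minimiser f (vmeet X Y) /\ is_minimiser f (vjoin X Y).
Proof.
move=> hf minX minY; have := hf X Y.
have := minX (vmeet X Y); have := minY (vjoin X Y).
by split=> W; have := minX W; have := minY W; lra.
Qed.

Lemma int_minimisers_ddv_closed (R : realFieldType) n k (f : {ffun 'I_n -> 'I_k.+1} -> R) :
  k_submodular f -> ddv_closed [pred Y | is_minimiserb f Y && is_int Y].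
Proof.
move=> hf X Y Z /andP[/is_minimiserP mX /forallP iX] /andP[/is_minimiserP mY _].
move=> /andP[/is_minimiserP mZ /forallP iZ].
have -> : ddv X Y Z = vjoin (vjoin (vmeet X Y) Z) (vmeet X Y).
  by apply/ffunP => i; rewrite !ffunE dual_discr_kjoin_kmeet // !ffunE.
have [mXY _] := minimiser_vmeet_vjoin hf mX mY.
have [_ mXYZ] := minimiser_vmeet_vjoin hf mXY mZ.
have [_ m] := minimiser_vmeet_vjoin hf mXYZ mXY.
rewrite inE; apply/andP; split; first exact/is_minimiserP.
apply/forallP => i; rewrite !ffunE -dual_discr_kjoin_kmeet //.
by rewrite /dual_discr; case: ifP.
Qed.

Definition kconstr_valid n k (S : pred {ffun 'I_n -> 'I_k.+1}) (c : kconstr n k) :=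
  [forall Y, S Y ==> kconstr_sat c Y].

Definition all_kconstr n k : seq (kconstr n k) :=
  [seq CUnary p.1 p.2 | p <- enum {: 'I_n * {set 'I_k.+1}}] ++
  [seq CDisj p.1.1 p.1.2 p.2.1 p.2.2 | p <- enum {: ('I_n * 'I_n) * ('I_k.+1 * 'I_k.+1)}] ++
  [seq CPerm p.1.1 p.1.2 p.2 | p <- enum {: ('I_n * 'I_n) * {perm 'I_k.+1}}].

Lemma all_kconstrP n k (P : pred (kconstr n k)) :
  all P (all_kconstr n k) -> forall c, P c.
Proof.
rewrite !all_cat !all_map => /and3P[/allP PU /allP PD /allP PP].
by case=> [i A | i j a b | i j pi];
  [apply: (PU (i, A)) | apply: (PD ((i, j), (a, b))) | apply: (PP ((i, j), pi))];
  rewrite -enumT mem_enum.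
Qed.

Section ValidConstraints.

Variables (n k : nat) (S : pred {ffun 'I_n -> 'I_k.+1}).
Hypotheses (S_ddv : ddv_closed S) (S_int : forall Y, S Y -> is_int Y).
Variable X : {ffun 'I_n -> 'I_k.+1}.
Hypothesis X_sat : forall c, kconstr_wf c -> kconstr_valid S c -> kconstr_sat c X.

Let S_nz Y i : S Y -> Y i != ord0.
Proof. by move/S_int/forallP. Qed.

Lemma valid_kconstr_coord i : exists2 Y, S Y & Y i == X i.
Proof.
have : kconstr_sat (CUnary i [set u | [exists Y, S Y && (Y i == u)]]) X.
  apply: X_sat => //; apply/forallP => Y; apply/implyP => SY.
  by rewrite /= inE; apply/existsP; exists Y; rewrite SY /=.
by rewrite /= inE => /existsP[Y /andP[SY e]]; exists Y.
Qed.

Lemma valid_kconstr_pair i j : exists2 Y, S Y & (Y i == X i) && (Y j == X j).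
Proof.
pose B := coord_rel S i j.
have [Y1 S1 /eqP e1] := valid_kconstr_coord i.
have [Y2 S2 /eqP e2] := valid_kconstr_coord j.
have B_of Y : S Y -> B (Y i) (Y j) by move=> SY; apply/existsP; exists Y; rewrite SY !eqxx.
have B_nz u v : B u v -> (u != ord0) && (v != ord0).
  by move=> /existsP[Y /andP[/andP[SY /eqP <-] /eqP <-]]; rewrite !S_nz.
case: (boolP (B (X i) (X j))) => [/existsP[Y /andP[/andP[SY ei] ej]] | nBX].
  by exists Y; rewrite ?ei ?ej.
have BXY1 : B (X i) (Y1 j) by rewrite -e1; apply: B_of.
have BY2X : B (Y2 i) (X j) by rewrite -e2; apply: B_of.
have [[B_disj nX] | [pi pz [B_pi nX]]] := dual_discr_closed_rel_separated
  (@coord_rel_dual_discr_closed _ _ S S_ddv i j) B_nz BXY1 BY2X nBX; exfalso.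
- move: (X_sat (c := CDisj i j (Y2 i) (Y1 j))) nX => /= -> //.
    by rewrite !S_nz.
  by apply/forallP => Y; apply/implyP => /B_of /B_disj.
- move: (X_sat (c := CPerm i j pi)) nX => /= -> //; first by rewrite pz.
  by apply/forallP => Y; apply/implyP => /B_of /B_pi /= ->.
Qed.

End ValidConstraints.

Theorem lemma4 (R : realFieldType) (k n : nat) (hk : (2 <= k)%N)
  (f : {ffun 'I_n -> 'I_k.+1} -> R) (hf : k_submodular f) :
  exists cs : seq (kconstr n k),
    all (@kconstr_wf n k) cs /\
    forall X : {ffun 'I_n -> 'I_k.+1},
      is_int X ->
      (is_minimiser f X <-> all (fun c => kconstr_sat c X) cs).
Proof.
pose S := [pred Y | is_minimiserb f Y && is_int Y].
exists [seq c <- all_kconstr n k | kconstr_wf c && kconstr_valid S c].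
split; first by apply: sub_all (filter_all _ _) => c /andP[].
move=> X X_int; split => [X_min | X_sat].
  apply: sub_all (filter_all _ _) => c /andP[_ /forallP/(_ X)/implyP]; apply.
  by rewrite inE X_int andbT; apply/is_minimiserP.
have X_valid c : kconstr_wf c -> kconstr_valid S c -> kconstr_sat c X.
  move=> wf valid; move: X_sat; rewrite all_filter => /all_kconstrP/(_ c) /=.
  by rewrite wf valid.
have S_ddv := int_minimisers_ddv_closed hf.
have S_int Y : S Y -> is_int Y by case/andP.
have S_nonempty : exists Y, S Y.
  case: (pickP 'I_n) => [i _ | no_coord].
    by have [Y SY _] := valid_kconstr_pair S_ddv S_int X_valid i i; exists Y.
  have [Y _ Ymin] := @arg_minP _ R _ X xpredT f isT.
  exists Y; rewrite inE; apply/andP; split; first by apply/forallP => W; apply: Ymin.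
  by apply/forallP => i; have := no_coord i.
have /andP[/is_minimiserP //] := ddv_closed_pairwise_mem S_ddv S_nonempty
  (valid_kconstr_pair S_ddv S_int X_valid).
Qed.
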